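(* Consider the hard instance $G_{k,m}$ described in the context, and run Water-Filling on it. There is $k_0$ such that for all $k\ge k_0$ and all $m$, the resulting passive water-levels satisfy $p_{u_{t,i}}<1$ for all $t\in[m]$, $i\in[k]$, and $p_{v_{t,i}}<1$ for all $t\in[m-1]$, $i\in[k]$.
   Context: Fully online fractional matching model: an undirected graph is revealed online; each step is the arrival or the deadline of a vertex; at arrival, edges to previously arrived vertices are revealed; every neighbor of $v$ arrives before $v$'s deadline. The algorithm maintains $x_{uv}\ge 0$ with water-level $x_w:=\sum_{z}x_{wz}\le1$; $x_{uv}$ (with $u$ having the earlier deadline) may only be increased at $u$'s deadline. Water-Filling: at the deadline of $u$, with $N(u)$ the neighbors of $u$ whose deadlines have not been reached, while $x_u<1$ and $\min_{v\in N(u)}x_v<1$, continuously increase $x_{uv}$ at equal rates for all $v\in\arg\min_{v\in N(u)}x_v$. The passive water-level $p_w$ of a vertex $w$ is its water-level $x_w$ immediately before $w$'s deadline. Let $c=2-\sqrt2$, $f(x)=\tfrac12(\ln(1-x)+\ln(1-c+x))+\frac{1}{\sqrt2(x-1)}+\frac{2+\sqrt2-\ln(1-c)}{2}$ on $[0,c]$ (a strictly decreasing bijection onto $[0,1]$), and $h(x)=f(c-f^{-1}(x))$ for $x\in[0,1]$. Hard instance $G_{k,m}$: vertex set $\bigcup_{t\in[m]}(U_t\cup V_t)$ with $U_t=\{u_{t,1},\dots,u_{t,k}\}$, $V_t=\{v_{t,1},\dots,v_{t,k}\}$. Edges: $(u_{t,i},v_{t,j})$ for all $t\in[m]$, $i\in[k]$,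 $j\ge i$; and $(u_{t,i},u_{t+1,j})$ for all $t\in[m-1]$, $i\in[k]$, $1\le j\le\lfloor k\,h(\tfrac{i-1}{k})\rfloor$. All vertices arrive before any deadline. The deadlines of the $u$-vertices come first, in lexicographic order of $(t,i)$; afterwards the deadlines of all $v$-vertices are reached (in any order). *)

From Stdlib Require Import Reals Lra Lia ZArith Arith List ClassicalEpsilon.
Import ListNotations.
Open Scope bool_scope.
Open Scope R_scope.

Definition c : R := 2 - sqrt 2.

Definition f (x : R) : R :=
  / 2 * (ln (1 - x) + ln (1 - c + x)) + 1 / (sqrt 2 * (x - 1))
  + (2 + sqrt 2 - ln (1 - c)) / 2.

(* f^{-1} : [0,1] -> [0,c]; the paper states f is a strictly decreasing
   bijection [0,c] -> [0,1], so this picks the unique preimage in [0,c]. *)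
Definition finv (y : R) : R :=
  epsilon (inhabits 0) (fun x => 0 <= x <= c /\ f x = y).

Definition h (x : R) : R := f (c - finv x).

Definition nfloor (r : R) : nat := Z.to_nat (Int_part r).

(* U t i = u_{t,i},  V t i = v_{t,i}  (1-indexed: t in [1,m], i in [1,k]) *)
Inductive vtx : Type := U (t i : nat) | V (t i : nat).

Definition verts (k m : nat) : list vtx :=
  flat_map (fun t => map (U t) (seq 1 k) ++ map (V t) (seq 1 k)) (seq 1 m).

Definition inrange (a n : nat) : bool := (1 <=? a)%nat && (a <=? n)%nat.

(* directed description of the edge list of G_{k,m} *)
Definition edge (k m : nat) (a b : vtx) : bool :=
  match a, b with
  | U t i, V t' j =>
      (t =? t')%nat && inrange t m && inrange i k && inrange j k && (i <=? j)%nat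
  | U t i, U t' j =>
      (t' =? S t)%nat && inrange t (m - 1) && inrange i k && inrange j k
      && (j <=? nfloor (INR k * h ((INR i - 1) / INR k)))%nat
  | _, _ => false
  end.

Definition adj (k m : nat) (a b : vtx) : bool := edge k m a b || edge k m b a.

(** * Deadlines: the u-deadlines come first in lexicographic order of (t,i);
    deadline number s (0-based) is that of u_{s/k+1, s mod k + 1}. *)
Definition uvert (k s : nat) : vtx := U (s / k + 1) (s mod k + 1).

Definition upos (k t i : nat) : nat := ((t - 1) * k + (i - 1))%nat.

Definition not_reached (k s : nat) (w : vtx) : bool :=
  match w with
  | U t i => (s <? upos k t i)%nat
  | V _ _ => true
  end.

Definition nbrs (k m s : nat) : list vtx :=
  filter (fun w => adj k m (uvert k s) w && not_reached k s w) (verts k m).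

Definition state := vtx -> vtx -> R.

Definition lvl (VS : list vtx) (x : state) (w : vtx) : R :=
  fold_right Rplus 0 (map (x w) VS).

(* One Water-Filling step at the deadline of u with neighbour list N:
   the continuous process "raise x_{uv} at equal rates for all
   v in argmin_{v in N} x_v while x_u < 1 and min_{v in N} x_v < 1"
   ends with every v in N at level max(x_v, L) for a common level L <= 1,
   where it stopped because x_u reached 1 or all neighbours reached 1. *)
Definition wf_step (VS : list vtx) (u : vtx) (N : list vtx) (x x' : state) : Prop :=
  exists L : R, L <= 1 /\
    (forall v, In v N ->
        x' u v = x u v + Rmax 0 (L - lvl VS x v) /\
        x' v u = x v u + Rmax 0 (L - lvl VS x v)) /\
    (forall a b, ~ (a = u /\ In b N) -> ~ (b = u /\ In a N) -> x' a b = x a b) /\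
    lvl VS x' u <= 1 /\
    (lvl VS x' u = 1 \/ (forall v, In v N -> lvl VS x' v = 1)).

(* Row [t] of [G_{k,m}] consists of [V_t] and [U_{t+1}]; at its deadline [u_{t,i}] only
   sees vertices of row [t], at least [d_i = (k - i + 1) + min(k, floor (k h ((i-1)/k)))] of
   them, and the vertices of row [t] are filled only at the deadlines of [U_t].  A
   Water-Filling step raising [d] vertices to a common level spends at most one unit, so
   it lifts the highest level of the row by at most [1 / d]; hence every vertex of row
   [t] stays below [S = sum_i 1 / d_i], which bounds all the passive levels in question.

   It remains to show [S < 1].  With [y_i = f^{-1} ((i-1)/k)] and
   [A y = y (2 - y) / ((1 - y) (1 - c + y)) = - (1 - y) f'(y)], one has
   [h (f y) = f y + A y - 1], so [d_i > k A(y_i) - 1].  As [A] is nondecreasing,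
   [1 / (k A(y_i)) <= ln (1 - y_{i+1}) - ln (1 - y_i)], and the sum telescopes to at most
   [- ln (1 - c) = ln (1 + sqrt 2) < 0.89]; since [k A(y_i) >= 21] once [k >= 1000], the
   error terms keep [S] below [1]. *)

From Stdlib Require Import Reals Lra Lia List ZArith FinFun ClassicalEpsilon.
From Coquelicot Require Import Coquelicot.
Open Scope R_scope.

(** * The function f *)

Lemma sqrt2_sqr : sqrt 2 * sqrt 2 = 2.
Proof. apply sqrt_sqrt; lra. Qed.

Lemma sqrt2_bounds : 1.414 < sqrt 2 < 1.4143.
Proof. pose proof sqrt2_sqr; pose proof (sqrt_pos 2); split; nra. Qed.

Lemma c_bounds : 0.5857 < c < 0.586.
Proof. pose proof sqrt2_bounds; unfold c; lra. Qed.

(* Normalises a polynomial in [s] modulo [Hs : s * s = 2] by lowering every power. *)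
Ltac reduce_sqrt2 Hs :=
  let s := match type of Hs with ?s * ?s = 2 => s end in
  repeat match goal with
  | |- context [s ^ ?n] =>
     match n with
     | 0%nat => fail 1
     | 1%nat => fail 1
     | _ => replace (s ^ n) with (2 * s ^ (n - 2)) by (simpl; rewrite <- Hs; ring);
            simpl (n - 2)%nat
     end
  end.

Ltac field_sqrt2 :=
  let Hs := fresh "Hs" in
  pose proof sqrt2_sqr as Hs; pose proof sqrt2_bounds;
  unfold c in *; set (s := sqrt 2) in *;
  field_simplify_eq; [ring_simplify; reduce_sqrt2 Hs; ring | repeat split; nra ..].

Definition A (y : R) : R := y * (2 - y) / ((1 - y) * (1 - c + y)).

Lemma f_derivative (y : R) : 0 <= y <= c -> derivable_pt_lim f y (- A y / (1 - y)).
Proof.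
  intros Hy; pose proof c_bounds.
  apply is_derive_Reals; unfold f, A.
  auto_derive.
  - repeat split; try lra.
    apply Rmult_integral_contrapositive; split; unfold c in *; lra.
  - field_sqrt2.
Qed.

Lemma A_partial_fractions (y : R) : 0 <= y <= c ->
  A y = 1 + (/ (1 - y) - / (1 - c + y)) / sqrt 2.
Proof. intros Hy; pose proof c_bounds; unfold A; field_sqrt2. Qed.

Lemma A_ge (y : R) : 0 <= y <= c -> 2 * y <= A y.
Proof.
  intros Hy; pose proof c_bounds; pose proof sqrt2_sqr.
  assert (Hd : 0 < (1 - y) * (1 - c + y)) by nra.
  assert (HA : A y * ((1 - y) * (1 - c + y)) = y * (2 - y))
    by (unfold A; field; split; lra).
  (* AM-GM: the product of [1 - y] and [1 - c + y] is at most [((2 - c) / 2)^2 = 1/2] *)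
  assert (HD : (1 - y) * (1 - c + y) <= / 2).
  { pose proof (pow2_ge_0 ((1 - y) - (1 - c + y))); unfold c in *; nra. }
  nra.
Qed.

Lemma A_nondecreasing (p q : R) : 0 <= p -> p <= q -> q <= c -> A p <= A q.
Proof.
  intros Hp Hpq Hq; pose proof c_bounds; pose proof sqrt2_bounds.
  rewrite !A_partial_fractions by lra.
  apply Rplus_le_compat_l; unfold Rdiv; apply Rmult_le_compat_r.
  - left; apply Rinv_0_lt_compat; lra.
  - assert (/ (1 - p) <= / (1 - q)) by (apply Rinv_le_contravar; lra).
    assert (/ (1 - c + q) <= / (1 - c + p)) by (apply Rinv_le_contravar; lra).
    lra.
Qed.

Lemma nonincreasing_of_derivative_nonpos (g g' : R -> R) (a b : R) : a <= b ->
  (forall t, a <= t <= b -> derivable_pt_lim g t (g' t)) ->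
  (forall t, a <= t <= b -> g' t <= 0) -> g b <= g a.
Proof.
  intros Hab Hd Hneg. destruct (Req_dec a b) as [<-|Hne]; [lra|].
  destruct (MVT_cor2 g g' a b ltac:(lra) Hd) as [t [Ht Hint]].
  pose proof (Hneg t ltac:(lra)). nra.
Qed.

Lemma f_nonincreasing (a b : R) : 0 <= a -> a <= b -> b <= c -> f b <= f a.
Proof.
  intros Ha Hab Hb. pose proof c_bounds.
  apply (nonincreasing_of_derivative_nonpos f (fun y => - A y / (1 - y))); [lra| |].
  - intros t Ht; apply f_derivative; lra.
  - intros t Ht. pose proof (A_ge t ltac:(lra)).
    assert (0 <= A t / (1 - t)) by (apply Rdiv_le_0_compat; lra).
    unfold Rdiv in *; lra.
Qed.

Lemma f_0 : f 0 = 1.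
Proof. unfold f; rewrite Rminus_0_r, Rplus_0_r, ln_1; field_sqrt2. Qed.

Lemma f_c : f c = 0.
Proof. unfold f; replace (1 - c + c) with 1 by ring; rewrite ln_1; field_sqrt2. Qed.

Lemma f_c_sub (y : R) : 0 <= y <= c -> f (c - y) = f y + A y - 1.
Proof.
  intros Hy; pose proof c_bounds; unfold f, A.
  replace (1 - (c - y)) with (1 - c + y) by ring.
  replace (1 - c + (c - y)) with (1 - y) by ring.
  field_sqrt2.
Qed.

Lemma one_sub_inv_le_ln (x : R) : 0 < x -> 1 - / x <= ln x.
Proof.
  intros Hx. pose proof (exp_ineq1_le (- ln x)).
  rewrite exp_Ropp, exp_ln in H by exact Hx. lra.
Qed.

Lemma one_sub_f_le (y : R) : 0 <= y <= c -> 1 - f y <= 8 * y ^ 2.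
Proof.
  intros Hy. pose proof sqrt2_bounds. pose proof c_bounds.
  assert (E1 : - y / (1 - y) <= ln (1 - y)).
  { replace (- y / (1 - y)) with (1 - / (1 - y)) by (field; lra).
    apply one_sub_inv_le_ln; lra. }
  assert (E2 : y / (1 - c + y) <= ln (1 - c + y) - ln (1 - c)).
  { rewrite <- ln_div by lra.
    replace (y / (1 - c + y)) with (1 - / ((1 - c + y) / (1 - c))) by (field; lra).
    apply one_sub_inv_le_ln, Rdiv_lt_0_compat; lra. }
  assert (Hid : 1 - (/ 2 * (- y / (1 - y) + y / (1 - c + y)) + 1 / (sqrt 2 * (y - 1))
                     + (2 + sqrt 2) / 2)
    = y ^ 2 * ((/ 2 + / sqrt 2) * / (1 - y) + / 2 * / (1 - c) * / (1 - c + y)))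
    by field_sqrt2.
  assert (B1 : / (1 - y) <= / (1 - c)) by (apply Rinv_le_contravar; lra).
  assert (B2 : / (1 - c + y) <= / (1 - c)) by (apply Rinv_le_contravar; lra).
  assert (B3 : / (1 - c) <= 2.5).
  { replace 2.5 with (/ / 2.5) by (field; lra). apply Rinv_le_contravar; lra. }
  assert (B4 : / sqrt 2 <= 0.71).
  { replace 0.71 with (/ / 0.71) by (field; lra). apply Rinv_le_contravar; lra. }
  assert (P1 : 0 <= / (1 - y)) by (left; apply Rinv_0_lt_compat; lra).
  assert (P2 : 0 <= / (1 - c + y)) by (left; apply Rinv_0_lt_compat; lra).
  assert (P3 : 0 <= / sqrt 2) by (left; apply Rinv_0_lt_compat; lra).
  assert ((/ 2 + / sqrt 2) * / (1 - y) + / 2 * / (1 - c) * / (1 - c + y) <= 8) by nra.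
  pose proof (pow2_ge_0 y). unfold f. nra.
Qed.

(* [phi t = ln (1 - t) - f t / A b] has derivative [(A t - A b) / (A b (1 - t))],
   so, [A] being nondecreasing, [phi] is minimal at [t = b]. *)
Lemma f_diff_div_A_le (a b : R) : 0 <= a <= c -> 0 < b <= c ->
  (f a - f b) / A b <= ln (1 - a) - ln (1 - b).
Proof.
  intros Ha Hb. pose proof c_bounds.
  assert (HAb : 0 < A b) by (pose proof (A_ge b ltac:(lra)); lra).
  set (phi := fun t => ln (1 - t) - / A b * f t).
  set (phi' := fun t => (A t - A b) / (A b * (1 - t))).
  assert (D : forall t, 0 <= t <= c -> derivable_pt_lim phi t (phi' t)).
  { intros t Ht.
    replace (phi' t) with (- / (1 - t) - / A b * (- A t / (1 - t)))
      by (unfold phi'; field; lra).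
    apply (derivable_pt_lim_minus (fun t => ln (1 - t)) (fun t => / A b * f t)).
    - apply is_derive_Reals. auto_derive; [lra|]. field. lra.
    - apply (derivable_pt_lim_scal f), f_derivative, Ht. }
  assert (Hphi : phi b <= phi a).
  { destruct (Rle_dec a b) as [Hle|Hgt].
    - apply (nonincreasing_of_derivative_nonpos phi phi'); [exact Hle| intros t Ht; apply D; lra|].
      intros t Ht. assert (A t <= A b) by (apply A_nondecreasing; lra).
      unfold phi'. apply Rmult_le_0_r; [lra|]. left; apply Rinv_0_lt_compat; nra.
    - enough (- phi a <= - phi b) by lra.
      apply (nonincreasing_of_derivative_nonpos (fun t => - phi t) (fun t => - phi' t));
        [lra| intros t Ht; apply derivable_pt_lim_opp, D; lra|].
      intros t Ht. assert (A b <= A t) by (apply A_nondecreasing; lra).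
      enough (0 <= phi' t) by lra.
      apply Rmult_le_pos; [lra|]. left; apply Rinv_0_lt_compat; nra. }
  unfold phi in Hphi. unfold Rdiv. lra.
Qed.

Lemma finv_spec (x : R) : 0 <= x < 1 -> 0 <= finv x <= c /\ f (finv x) = x.
Proof.
  intros Hx. pose proof c_bounds. unfold finv. apply epsilon_spec.
  destruct (Req_dec x 0) as [->|Hx0]; [exists c; split; [lra| apply f_c]|].
  destruct (Ranalysis5.IVT_interv (fun t => x - f t) 0 c) as [z [Hz Hfz]].
  - intros a Ha. apply continuity_pt_minus; [apply continuity_pt_const; now intros ? ?|].
    apply derivable_continuous_pt. exists (- A a / (1 - a)). apply f_derivative, Ha.
  - lra.
  - rewrite f_0; lra.
  - rewrite f_c; lra.
  - exists z. split; [exact Hz| lra].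
Qed.

Lemma neg_ln_one_sub_c_lt : - ln (1 - c) < 0.89.
Proof.
  pose proof sqrt2_bounds. pose proof sqrt2_sqr.
  assert (E : 1 - c = / (sqrt 2 + 1)) by (unfold c; field_simplify_eq; nra).
  rewrite E, ln_Rinv, Ropp_involutive by lra.
  pose proof (exp_ge_taylor 0.89 4 ltac:(lra)) as Ht.
  simpl in Ht. unfold Factorial.fact in Ht; simpl in Ht.
  rewrite <- (ln_exp 0.89). apply ln_increasing; lra.
Qed.

(** * The degrees at the deadlines *)

Lemma nfloor_gt (z : R) : z - 1 < INR (nfloor z).
Proof.
  unfold nfloor. pose proof (base_Int_part z).
  destruct (Z_le_gt_dec 0 (Int_part z)).
  - rewrite INR_IZR_INZ, Z2Nat.id by assumption. lra.
  - replace (Z.to_nat (Int_part z)) with 0%nat by lia.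
    assert (IZR (Int_part z) <= -1) by (apply IZR_le; lia). simpl; lra.
Qed.

Lemma nfloor_le (z : R) (k : nat) : z <= INR k -> (nfloor z <= k)%nat.
Proof.
  intros Hz. unfold nfloor. pose proof (base_Int_part z).
  destruct (Z_le_gt_dec 0 (Int_part z)); [|lia].
  apply INR_le. rewrite INR_IZR_INZ, Z2Nat.id by assumption. lra.
Qed.

(* For [t < m], the neighbours of [u_{t,i}] at its deadline are the [v_{t,j}] with
   [j >= i] and the [u_{t+1,j}] with [j <= next_row_deg k i]; [deadline_deg k i]
   counts them. *)
Definition next_row_deg (k i : nat) : nat := nfloor (INR k * h ((INR i - 1) / INR k)).

Definition deadline_deg (k i : nat) : nat := (k - i + 1 + Nat.min k (next_row_deg k i))%nat.

Definition yk (k i : nat) : R := finv ((INR i - 1) / INR k).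

Lemma frac_range (k i : nat) : (1 <= i <= k)%nat ->
  0 <= (INR i - 1) / INR k <= 1 - / INR k.
Proof.
  intros Hi. assert (Hk : 0 < INR k) by (apply lt_0_INR; lia).
  assert (1 <= INR i <= INR k) by (split; [apply (le_INR 1)| apply le_INR]; lia).
  split; [apply Rdiv_le_0_compat; lra|].
  replace (1 - / INR k) with ((INR k - 1) / INR k) by (field; lra).
  unfold Rdiv. apply Rmult_le_compat_r; [left; apply Rinv_0_lt_compat|]; lra.
Qed.

Lemma yk_spec (k i : nat) : (1 <= i <= k)%nat ->
  0 <= yk k i <= c /\ f (yk k i) = (INR i - 1) / INR k.
Proof.
  intros Hi. pose proof (frac_range k i Hi).
  assert (0 < / INR k) by (apply Rinv_0_lt_compat, lt_0_INR; lia).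
  apply finv_spec. lra.
Qed.

Lemma kA_yk_ge (k i : nat) : (1000 <= k)%nat -> (1 <= i <= k)%nat ->
  21 <= INR k * A (yk k i) /\ 0 < yk k i.
Proof.
  intros Hk Hi. destruct (yk_spec k i Hi) as [Hy Hf].
  pose proof (frac_range k i Hi).
  assert (HK : 1000 <= INR k) by (replace 1000 with (INR 1000) by (simpl; lra); apply le_INR, Hk).
  pose proof (one_sub_f_le _ Hy). pose proof (A_ge _ Hy).
  set (y := yk k i) in *.
  assert (Hyy : 1 <= 8 * INR k * y ^ 2).
  { assert (INR k * / INR k = 1) by (field; lra). nra. }
  assert (21 <= 2 * INR k * y) by nra.
  split; nra.
Qed.

Lemma deadline_deg_gt (k i : nat) : (1000 <= k)%nat -> (1 <= i <= k)%nat ->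
  INR k * A (yk k i) - 1 < INR (deadline_deg k i).
Proof.
  intros Hk Hi. destruct (yk_spec k i Hi) as [Hy Hf]. pose proof c_bounds.
  assert (HK : 0 < INR k) by (apply lt_0_INR; lia).
  assert (Hh : h ((INR i - 1) / INR k) = (INR i - 1) / INR k + A (yk k i) - 1).
  { unfold h. fold (yk k i). rewrite f_c_sub by exact Hy. rewrite Hf. ring. }
  assert (Hh1 : h ((INR i - 1) / INR k) <= 1).
  { unfold h. fold (yk k i). rewrite <- f_0. apply f_nonincreasing; lra. }
  assert (HF : (next_row_deg k i <= k)%nat).
  { apply nfloor_le. apply Rle_trans with (INR k * 1); [apply Rmult_le_compat_l|]; lra. }
  unfold deadline_deg. rewrite Nat.min_r by exact HF.
  rewrite !plus_INR, minus_INR by lia.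
  pose proof (nfloor_gt (INR k * h ((INR i - 1) / INR k))) as Hfl.
  fold (next_row_deg k i) in Hfl. rewrite Hh in Hfl.
  replace (INR k * ((INR i - 1) / INR k + A (yk k i) - 1))
    with (INR i - 1 + INR k * A (yk k i) - INR k) in Hfl by (field; lra).
  simpl (INR 1). lra.
Qed.

Lemma inv_deadline_deg_pos (k i : nat) : 0 < / INR (deadline_deg k i).
Proof. apply Rinv_0_lt_compat, lt_0_INR. unfold deadline_deg. lia. Qed.

Fixpoint sum_to (g : nat -> R) (n : nat) : R :=
  match n with O => 0 | S n' => sum_to g n' + g (S n') end.

Definition inv_deg_sum (k n : nat) : R := sum_to (fun i => / INR (deadline_deg k i)) n.

Lemma inv_deg_sum_S (k n : nat) :
  inv_deg_sum k (S n) = inv_deg_sum k n + / INR (deadline_deg k (S n)).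
Proof. reflexivity. Qed.

Lemma inv_deg_sum_nonneg (k n : nat) : 0 <= inv_deg_sum k n.
Proof.
  induction n as [|n IH]; [unfold inv_deg_sum; simpl; lra|].
  rewrite inv_deg_sum_S. pose proof (inv_deadline_deg_pos k (S n)). lra.
Qed.

Lemma inv_deadline_deg_le (k i : nat) : (1000 <= k)%nat -> (1 <= i <= k)%nat ->
  / INR (deadline_deg k i) <= 21 / 20 * / (INR k * A (yk k i)).
Proof.
  intros Hk Hi. pose proof (deadline_deg_gt k i Hk Hi). destruct (kA_yk_ge k i Hk Hi) as [H1 _].
  set (a := INR k * A (yk k i)) in *.
  apply Rle_trans with (/ (a - 1)); [apply Rinv_le_contravar; lra|].
  replace (21 / 20 * / a) with (/ (a * 20 / 21)) by (field; lra).
  apply Rinv_le_contravar; lra.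
Qed.

Lemma inv_kA_yk_le (k i : nat) : (1000 <= k)%nat -> (1 <= i)%nat -> (i + 1 <= k)%nat ->
  / (INR k * A (yk k i)) <= ln (1 - yk k (S i)) - ln (1 - yk k i).
Proof.
  intros Hk Hi Hik.
  destruct (yk_spec k i ltac:(lia)) as [Hy Hf].
  destruct (yk_spec k (S i) ltac:(lia)) as [Hy' Hf'].
  destruct (kA_yk_ge k i Hk ltac:(lia)) as [_ Hpos].
  assert (HK : 0 < INR k) by (apply lt_0_INR; lia).
  assert (HA : 0 < A (yk k i)) by (pose proof (A_ge _ Hy); lra).
  pose proof (f_diff_div_A_le (yk k (S i)) (yk k i) Hy' ltac:(lra)) as Hd.
  rewrite Hf, Hf', S_INR in Hd.
  replace ((INR i + 1 - 1) / INR k - (INR i - 1) / INR k) with (/ INR k) in Hd by (field; lra).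
  replace (/ (INR k * A (yk k i))) with (/ INR k / A (yk k i)) by (field; lra).
  exact Hd.
Qed.

Lemma inv_deg_sum_le_ln (k n : nat) : (1000 <= k)%nat -> (n + 1 <= k)%nat ->
  inv_deg_sum k n
  <= 21 / 20 * (ln (1 - yk k (S n)) - ln (1 - yk k 1)).
Proof.
  intros Hk. induction n as [|n IH]; intros Hn; [unfold inv_deg_sum; simpl; lra|].
  rewrite inv_deg_sum_S. pose proof (IH ltac:(lia)).
  pose proof (inv_deadline_deg_le k (S n) Hk ltac:(lia)).
  pose proof (inv_kA_yk_le k (S n) Hk ltac:(lia) ltac:(lia)).
  lra.
Qed.

Lemma inv_deg_sum_lt_1 (k : nat) : (1000 <= k)%nat ->
  inv_deg_sum k k < 1.
Proof.
  intros Hk. destruct k as [|n]; [lia|]. rewrite inv_deg_sum_S.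
  pose proof (inv_deg_sum_le_ln (S n) n Hk ltac:(lia)).
  pose proof (inv_deadline_deg_le (S n) (S n) Hk ltac:(lia)).
  destruct (kA_yk_ge (S n) (S n) Hk ltac:(lia)) as [HB _].
  destruct (yk_spec (S n) (S n) ltac:(lia)) as [Hyk _].
  destruct (yk_spec (S n) 1 ltac:(lia)) as [Hy1 _].
  pose proof c_bounds. pose proof neg_ln_one_sub_c_lt.
  assert (ln (1 - yk (S n) (S n)) <= 0) by (rewrite <- ln_1; apply ln_le; lra).
  assert (- ln (1 - yk (S n) 1) <= - ln (1 - c)) by (apply Ropp_le_contravar, ln_le; lra).
  assert (/ (INR (S n) * A (yk (S n) (S n))) <= / 21) by (apply Rinv_le_contravar; lra).
  lra.
Qed.

Definition sumR {T : Type} (l : list T) (g : T -> R) : R := fold_right Rplus 0 (map g l).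

Lemma lvl_sumR (VS : list vtx) (x : state) (w : vtx) : lvl VS x w = sumR VS (x w).
Proof. reflexivity. Qed.

Lemma lvl_zero (VS : list vtx) (w : vtx) : lvl VS (fun _ _ => 0) w = 0.
Proof. induction VS as [|a VS IH]; [reflexivity|]. unfold lvl in *; simpl; lra. Qed.

Section ListSums.
Context {T : Type}.

Lemma sumR_ext (l : list T) (g1 g2 : T -> R) :
  (forall z, In z l -> g1 z = g2 z) -> sumR l g1 = sumR l g2.
Proof.
  induction l as [|a l IH]; intros H; unfold sumR in *; simpl; [reflexivity|].
  rewrite (H a (or_introl eq_refl)), IH by (intros z Hz; apply H; right; exact Hz).
  reflexivity.
Qed.

Lemma sumR_const_le (l : list T) (g : T -> R) (a : R) :
  (forall z, In z l -> a <= g z) -> INR (length l) * a <= sumR l g.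
Proof.
  induction l as [|b l IH]; intros H; unfold sumR in *; cbn [length map fold_right]; [simpl; lra|].
  rewrite S_INR. pose proof (H b (or_introl eq_refl)).
  pose proof (IH (fun z Hz => H z (or_intror Hz))). lra.
Qed.

Lemma sumR_filter_le (P : T -> bool) (l : list T) (g : T -> R) :
  (forall z, 0 <= g z) -> sumR (filter P l) g <= sumR l g.
Proof.
  intros H; induction l as [|a l IH]; unfold sumR in *; simpl; [lra|].
  destruct (P a); simpl; pose proof (H a); lra.
Qed.

Lemma sumR_update (l : list T) (g1 g2 : T -> R) (u : T) : NoDup l -> In u l ->
  (forall z, z <> u -> g2 z = g1 z) -> sumR l g2 = sumR l g1 + (g2 u - g1 u).
Proof.
  induction l as [|a l IH]; intros Hn Hu H; [destruct Hu|].
  apply NoDup_cons_iff in Hn as [Ha Hn].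
  change (g2 a + sumR l g2 = g1 a + sumR l g1 + (g2 u - g1 u)).
  destruct Hu as [->|Hu].
  - rewrite (sumR_ext l g2 g1); [lra|].
    intros z Hz; apply H; intros ->; contradiction.
  - rewrite (IH Hn Hu H), (H a); [lra|]. intros ->; contradiction.
Qed.

End ListSums.

Lemma NoDup_flat_map {T1 T2 : Type} (g : T1 -> list T2) (l : list T1) :
  NoDup l -> (forall a, NoDup (g a)) ->
  (forall a b w, In w (g a) -> In w (g b) -> a = b) -> NoDup (flat_map g l).
Proof.
  intros Hn Hg Hd; induction Hn as [|a l Ha Hn IH]; simpl; [constructor|].
  apply NoDup_app; [apply Hg| exact IH|].
  intros w Hw Hw'. apply in_flat_map in Hw' as [b [Hb Hwb]].
  rewrite (Hd a b w Hw Hwb) in Ha. contradiction.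
Qed.

(** * Water-Filling steps *)

Section WaterFillingStep.
Variables (VS : list vtx) (P : vtx -> bool) (u : vtx) (x x' : state).
Let N := filter P VS.
Hypothesis HVS : NoDup VS.
Hypothesis HuVS : In u VS.
Hypothesis HuN : ~ In u N.
Hypothesis Hx : forall a b, 0 <= x a b.
Hypothesis Hstep : wf_step VS u N x x'.

Lemma wf_step_nonneg : forall a b, 0 <= x' a b.
Proof.
  destruct Hstep as [L [_ [Hin [Hoth _]]]]. intros a b.
  destruct (classic (a = u /\ In b N)) as [[-> Hb]|H1].
  - rewrite (proj1 (Hin b Hb)). pose proof (Hx u b). pose proof (Rmax_l 0 (L - lvl VS x b)). lra.
  - destruct (classic (b = u /\ In a N)) as [[-> Ha]|H2].
    + rewrite (proj2 (Hin a Ha)). pose proof (Hx a u). pose proof (Rmax_l 0 (L - lvl VS x a)). lra.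
    + rewrite (Hoth a b H1 H2). apply Hx.
Qed.

Lemma wf_step_lvl_frozen (w : vtx) : w <> u -> ~ In w N -> lvl VS x' w = lvl VS x w.
Proof.
  destruct Hstep as [L [_ [_ [Hoth _]]]]. intros Hwu HwN.
  apply sumR_ext. intros z _. apply Hoth; intros [H1 H2]; contradiction.
Qed.

(* If all neighbours start below [M], the final common level [L] exceeds [M] by
   at most [1 / |N|], since raising all of them from [M] to [L] costs
   [|N| (L - M)] of the at most one unit of water of [u]. *)
Lemma wf_step_lvl_le (M : R) : (forall v, In v N -> lvl VS x v <= M) ->
  forall v, In v N -> lvl VS x' v <= M + / INR (length N).
Proof.
  pose proof wf_step_nonneg as Hx'.
  destruct Hstep as [L [_ [Hin [Hoth [Hu1 _]]]]]. intros HM v Hv.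
  assert (Hvu : v <> u) by (intros ->; contradiction).
  assert (Hlen : 0 < INR (length N)) by (apply lt_0_INR; destruct N; [destruct Hv| simpl; lia]).
  assert (Hinv : 0 < / INR (length N)) by (apply Rinv_0_lt_compat, Hlen).
  assert (Hlv : lvl VS x' v = lvl VS x v + Rmax 0 (L - lvl VS x v)).
  { rewrite !lvl_sumR, (sumR_update VS (x v) (x' v) u HVS HuVS).
    - rewrite (proj2 (Hin v Hv)), lvl_sumR. ring.
    - intros z Hz. apply Hoth; intros [H1 H2]; contradiction. }
  assert (HLM : L <= M + / INR (length N)).
  { destruct (Rle_dec L M) as [HLe|HLt]; [lra|].
    assert (INR (length N) * (L - M) <= sumR N (x' u)).
    { apply sumR_const_le. intros z Hz. rewrite (proj1 (Hin z Hz)).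
      pose proof (HM z Hz). pose proof (Rmax_r 0 (L - lvl VS x z)). pose proof (Hx u z). lra. }
    assert (sumR N (x' u) <= lvl VS x' u) by (apply sumR_filter_le, Hx').
    apply Rmult_le_reg_l with (INR (length N)); [exact Hlen|].
    rewrite Rmult_plus_distr_l, Rinv_r by lra. lra. }
  rewrite Hlv. pose proof (HM v Hv).
  destruct (Rle_dec L (lvl VS x v)).
  - rewrite Rmax_left by lra. lra.
  - rewrite Rmax_right by lra. lra.
Qed.

End WaterFillingStep.

(** * The instance G_{k,m} *)

Ltac bool_to_prop :=
  repeat rewrite ?Bool.orb_true_iff, ?Bool.andb_true_iff, ?Nat.eqb_eq, ?Nat.leb_le,
    ?Nat.ltb_lt in *.

Lemma vtx_eq_dec (a b : vtx) : {a = b} + {a <> b}.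
Proof. decide equality; apply Nat.eq_dec. Qed.

Definition in_row (t : nat) (w : vtx) : Prop :=
  match w with V t' _ => t' = t | U t' _ => t' = S t end.

Lemma in_verts (k m : nat) (w : vtx) : In w (verts k m) <->
  match w with U t i | V t i => (1 <= t <= m)%nat /\ (1 <= i <= k)%nat end.
Proof.
  unfold verts. rewrite in_flat_map. split.
  - intros [t [Ht Hw]]. apply in_seq in Ht.
    apply in_app_iff in Hw as [Hw|Hw]; apply in_map_iff in Hw as [j [<- Hj]];
      apply in_seq in Hj; lia.
  - destruct w as [t i|t i]; intros [Ht Hi]; exists t; split; try (apply in_seq; lia);
      apply in_app_iff; [left|right]; apply in_map_iff; exists i; split; auto; apply in_seq; lia.
Qed.

Lemma verts_NoDup (k m : nat) : NoDup (verts k m).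
Proof.
  assert (HU : forall t, Injective (U t)) by (intros t a b E; injection E; auto).
  assert (HV : forall t, Injective (V t)) by (intros t a b E; injection E; auto).
  apply NoDup_flat_map; [apply seq_NoDup| |].
  - intros t. apply NoDup_app; try (apply Injective_map_NoDup; [auto| apply seq_NoDup]).
    intros w H1 H2. apply in_map_iff in H1 as [? [<- _]].
    apply in_map_iff in H2 as [? [? _]]. discriminate.
  - intros a b w H1 H2. apply in_app_iff in H1, H2.
    destruct H1 as [H1|H1]; apply in_map_iff in H1 as [? [<- _]];
      destruct H2 as [H2|H2]; apply in_map_iff in H2 as [? [H2 _]]; congruence.
Qed.

Lemma div_mod_block (k q s : nat) : (q * k <= s < q * k + k)%nat ->
  (s / k = q /\ s mod k = s - q * k)%nat.
Proof.
  intros Hs. split.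
  - symmetry. apply (Nat.div_unique _ _ _ (s - q * k)); lia.
  - symmetry. apply (Nat.mod_unique _ _ q); lia.
Qed.

Lemma uvert_block (k q s : nat) : (q * k <= s < q * k + k)%nat ->
  uvert k s = U (q + 1) (s - q * k + 1).
Proof. intros Hs. unfold uvert. destruct (div_mod_block k q s Hs) as [-> ->]. reflexivity. Qed.

Lemma uvert_upos (k t i : nat) : (1 <= t)%nat -> (1 <= i <= k)%nat ->
  uvert k (upos k t i) = U t i.
Proof.
  intros Ht Hi. unfold upos. rewrite (uvert_block k (t - 1)) by lia. f_equal; lia.
Qed.

Definition nbr_test (k m s : nat) (w : vtx) : bool :=
  adj k m (uvert k s) w && not_reached k s w.

Lemma in_nbrs (k m s : nat) (w : vtx) : In w (nbrs k m s) <->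
  In w (verts k m) /\ adj k m (uvert k s) w = true /\ not_reached k s w = true.
Proof. unfold nbrs. rewrite filter_In, Bool.andb_true_iff. tauto. Qed.

Lemma nbrs_in_row (k m s : nat) (w : vtx) : (0 < k)%nat ->
  In w (nbrs k m s) -> in_row (s / k + 1) w.
Proof.
  intros Hk Hw. apply in_nbrs in Hw as [_ [Ha Hn]].
  pose proof (Nat.div_mod_eq s k). pose proof (Nat.mod_upper_bound s k ltac:(lia)).
  unfold uvert in Ha. set (q := (s / k)%nat) in *. set (r := (s mod k)%nat) in *.
  destruct w as [t j|t j]; simpl; unfold adj, edge, inrange, not_reached, upos in *; bool_to_prop.
  - destruct Ha as [Ha|Ha]; [lia|]. nia.
  - destruct Ha as [Ha|Ha]; [lia| discriminate].
Qed.

Lemma deadline_deg_le_length_nbrs (k m t i : nat) : (1 <= t <= m - 1)%nat -> (1 <= i <= k)%nat ->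
  (deadline_deg k i <= length (nbrs k m (upos k t i)))%nat.
Proof.
  intros Ht Hi.
  set (l := map (V t) (seq i (k - i + 1)) ++ map (U (S t)) (seq 1 (Nat.min k (next_row_deg k i)))).
  replace (deadline_deg k i) with (length l)
    by (unfold l, deadline_deg; rewrite length_app, !length_map, !length_seq; reflexivity).
  apply NoDup_incl_length.
  - assert (HU : Injective (U (S t))) by (intros a b E; injection E; auto).
    assert (HV : Injective (V t)) by (intros a b E; injection E; auto).
    apply NoDup_app; try (apply Injective_map_NoDup; [auto| apply seq_NoDup]).
    intros w H1 H2. apply in_map_iff in H1 as [? [<- _]].
    apply in_map_iff in H2 as [? [? _]]. discriminate.
  - intros w Hw. apply in_nbrs. rewrite uvert_upos by lia.
    apply in_app_iff in Hw as [Hw|Hw]; apply in_map_iff in Hw as [j [<- Hj]];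
      apply in_seq in Hj; (split; [apply in_verts; lia|]);
      unfold next_row_deg, adj, edge, inrange, not_reached, upos in *; bool_to_prop.
    + split; [left; lia| reflexivity].
    + split; [left; lia| nia].
Qed.

(** * Water-Filling on G_{k,m} *)

Section Run.
Variables (k m : nat) (X : nat -> state).
Hypothesis Hk : (0 < k)%nat.
Hypothesis HX0 : X 0%nat = (fun _ _ => 0).
Hypothesis Hstep : forall s : nat, (s < m * k)%nat ->
  wf_step (verts k m) (uvert k s) (nbrs k m s) (X s) (X (S s)).

Lemma uvert_in_verts (s : nat) : (s < m * k)%nat -> In (uvert k s) (verts k m).
Proof.
  intros Hs. apply in_verts. unfold uvert.
  pose proof (Nat.Div0.div_lt_upper_bound s k m ltac:(lia)).
  pose proof (Nat.mod_upper_bound s k ltac:(lia)). lia.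
Qed.

Lemma uvert_notin_nbrs (s : nat) : ~ In (uvert k s) (nbrs k m s).
Proof. intros H. apply nbrs_in_row in H; [|exact Hk]. unfold uvert, in_row in H. lia. Qed.

Lemma X_nonneg (s : nat) : (s <= m * k)%nat -> forall a b, 0 <= X s a b.
Proof.
  induction s as [|s IH]; intros Hs a b; [rewrite HX0; lra|].
  apply (wf_step_nonneg (verts k m) (nbr_test k m s)
           (uvert k s) (X s)); [apply IH; lia| apply Hstep; lia].
Qed.

Lemma lvl_step_frozen (s : nat) (w : vtx) : (s < m * k)%nat ->
  uvert k s <> w -> ~ In w (nbrs k m s) ->
  lvl (verts k m) (X (S s)) w = lvl (verts k m) (X s) w.
Proof.
  intros Hs Hu HN.
  apply (wf_step_lvl_frozen (verts k m) (nbr_test k m s)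
           (uvert k s)); auto.
Qed.

Lemma lvl_frozen (w : vtx) (s1 s2 : nat) : (s1 <= s2 <= m * k)%nat ->
  (forall s, (s1 <= s < s2)%nat -> uvert k s <> w /\ ~ in_row (s / k + 1) w) ->
  lvl (verts k m) (X s2) w = lvl (verts k m) (X s1) w.
Proof.
  induction s2 as [|s2 IH]; intros Hs Hfree.
  - replace s1 with 0%nat by lia. reflexivity.
  - destruct (Nat.eq_dec s1 (S s2)) as [->|Hne]; [reflexivity|].
    destruct (Hfree s2 ltac:(lia)) as [Hu Hrow].
    rewrite lvl_step_frozen; [| lia| exact Hu| intros HN; apply Hrow, (nbrs_in_row k m); auto].
    apply IH; [lia| intros s Hs'; apply Hfree; lia].
Qed.

Lemma row_lvl_le (t : nat) : (1 <= t <= m - 1)%nat -> forall i, (i <= k)%nat ->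
  forall w, in_row t w ->
  lvl (verts k m) (X ((t - 1) * k + i)%nat) w <= inv_deg_sum k i.
Proof.
  intros Ht. induction i as [|i IH]; intros Hi w Hw.
  - rewrite Nat.add_0_r, (lvl_frozen w 0 ((t - 1) * k)), HX0, lvl_zero; [apply inv_deg_sum_nonneg| nia|].
    intros s Hs. pose proof (Nat.Div0.div_lt_upper_bound s k (t - 1) ltac:(lia)).
    split; [unfold uvert| unfold in_row]; destruct w; simpl in Hw |- *; try congruence;
      intros E; try injection E; lia.
  - set (s := ((t - 1) * k + i)%nat).
    assert (Hs : s = upos k t (S i)) by (unfold s, upos; lia).
    assert (Hsm : (s < m * k)%nat) by (unfold s; nia).
    assert (Hq : (s / k + 1 = t)%nat)
      by (pose proof (div_mod_block k (t - 1) s ltac:(unfold s; lia)); lia).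
    replace ((t - 1) * k + S i)%nat with (S s) by (unfold s; lia).
    rewrite inv_deg_sum_S.
    pose proof (inv_deadline_deg_pos k (S i)).
    destruct (in_dec vtx_eq_dec w (nbrs k m s)) as [Hin|Hout].
    + assert (Hlen := deadline_deg_le_length_nbrs k m t (S i) Ht ltac:(lia)).
      rewrite <- Hs in Hlen.
      assert (/ INR (length (nbrs k m s)) <= / INR (deadline_deg k (S i)))
        by (apply Rinv_le_contravar; [apply lt_0_INR; unfold deadline_deg; lia| apply le_INR, Hlen]).
      assert (lvl (verts k m) (X (S s)) w
              <= inv_deg_sum k i + / INR (length (nbrs k m s))).
      { apply (wf_step_lvl_le (verts k m) (nbr_test k m s)
                 (uvert k s) (X s)); auto using verts_NoDup, uvert_in_verts, uvert_notin_nbrs.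
        - apply X_nonneg; lia.
        - intros v Hv. apply IH; [lia|]. rewrite <- Hq. apply (nbrs_in_row k m); auto. }
      lra.
    + rewrite lvl_step_frozen; auto.
      * pose proof (IH ltac:(lia) w Hw) as HIH. fold s in HIH. lra.
      * rewrite Hs, uvert_upos by lia. intros E. subst w. simpl in Hw. lia.
Qed.

Lemma passive_lvl_U_le (t i : nat) : (1 <= t <= m)%nat -> (1 <= i <= k)%nat ->
  lvl (verts k m) (X (upos k t i)) (U t i) <= inv_deg_sum k k.
Proof.
  intros Ht Hi.
  rewrite (lvl_frozen (U t i) ((t - 1) * k) (upos k t i)); [| unfold upos; nia |].
  2: { intros s Hs. unfold upos in Hs.
       rewrite (uvert_block k (t - 1) s) by lia.
       destruct (div_mod_block k (t - 1) s ltac:(lia)) as [-> _].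
       split; [intros E; injection E|]; simpl; lia. }
  destruct (Nat.eq_dec t 1) as [->|Ht1].
  - rewrite Nat.mul_0_l, HX0, lvl_zero.
    apply inv_deg_sum_nonneg.
  - replace ((t - 1) * k)%nat with ((t - 1 - 1) * k + k)%nat by nia.
    apply row_lvl_le; simpl; lia.
Qed.

Lemma final_lvl_V_le (t i : nat) : (1 <= t <= m - 1)%nat -> (1 <= i <= k)%nat ->
  lvl (verts k m) (X (m * k)%nat) (V t i) <= inv_deg_sum k k.
Proof.
  intros Ht Hi.
  rewrite (lvl_frozen (V t i) ((t - 1) * k + k) (m * k)); [apply row_lvl_le; simpl; lia| nia|].
  intros s Hs. split; [discriminate|].
  assert (t <= s / k)%nat by (apply Nat.div_le_lower_bound; nia).
  simpl; lia.
Qed.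
End Run.

Theorem lemma3p3 :
  exists k0 : nat, forall k m : nat, (k0 <= k)%nat ->
  forall X : nat -> state,
    X 0%nat = (fun _ _ => 0) ->
    (forall s : nat, (s < m * k)%nat ->
       wf_step (verts k m) (uvert k s) (nbrs k m s) (X s) (X (S s))) ->
    (forall t i : nat, (1 <= t <= m)%nat -> (1 <= i <= k)%nat ->
       lvl (verts k m) (X (upos k t i)) (U t i) < 1) /\
    (forall t i : nat, (1 <= t <= m - 1)%nat -> (1 <= i <= k)%nat ->
       lvl (verts k m) (X (m * k)%nat) (V t i) < 1).
Proof.
  exists 1000%nat. intros k m Hk X HX0 Hstep.
  pose proof (inv_deg_sum_lt_1 k Hk).
  split; intros t i Ht Hi.
  - pose proof (passive_lvl_U_le k m X ltac:(lia) HX0 Hstep t i Ht Hi). lra.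
  - pose proof (final_lvl_V_le k m X ltac:(lia) HX0 Hstep t i Ht Hi). lra.
Qed.
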